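(* Any edge-to-edge tiling of the sphere by quadrilaterals in which every vertex has degree $\ge 3$ contains a tile whose four vertices have degrees (in some order) $3,3,3,d$ with $d\ge3$; or $3,3,4,d$ with $4\le d\le 11$; or $3,3,5,d$ with $d\in\{5,6,7\}$; or $3,4,4,d$ with $d\in\{4,5\}$.
   Context: The degree of a vertex is the number of edges (equivalently, tile corners) at that vertex. *)

From mathcomp Require Import all_boot.
Set Implicit Arguments. Unset Strict Implicit. Unset Printing Implicit Defensive.

(* A tiling of the sphere is encoded combinatorially as a map (rotation system)
   on a finite set of darts T (a dart = a corner/half-edge incidence):
   - [e] is the edge involution (fixed-point free): e x is the other end of
     the edge carrying x;
   - [n] is the node (vertex) rotation, a permutation whose orbits are vertices;
   - the face permutation is [face n e := n \o e]; its orbits are the tiles. *)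

Definition face (T : finType) (n e : T -> T) : T -> T := fun x => n (e x).

Definition map_connected (T : finType) (n e : T -> T) : Prop :=
  forall x y : T, connect [rel a b | (b == n a) || (b == e a)] x y.

Definition spherical (T : finType) (n e : T -> T) : Prop :=
  fcard n T + fcard (face n e) T = fcard e T + 2.

Definition quad_tiling_of_sphere (T : finType) (n e : T -> T) : Prop :=
  [/\ injective n,
      (forall x, e (e x) = x),
      (forall x, e x != x),
      map_connected n e &
      [/\ spherical n e,
      (forall x, order (face n e) x = 4) &
      forall x (i j : nat), i < j < 4 ->
        ~~ fconnect n (iter i (face n e) x) (iter j (face n e) x)]].

Definition vdeg (T : finType) (n : T -> T) (x : T) : nat := order n x.

Definition tile_degrees (T : finType) (n e : T -> T) (x : T) : seq nat :=
  [seq vdeg n (iter i (face n e) x) | i <- iota 0 4].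

From mathcomp Require Import all_boot all_order all_algebra.
From mathcomp Require Import lra zify.
Import Order.TTheory GRing.Theory Num.Theory.

Set Implicit Arguments.
Unset Strict Implicit.
Unset Printing Implicit Defensive.

(* Counting darts gives 4F = |T| = 2E, so Euler's formula V + F = E + 2
   reads V = |T|/4 + 2.  Since V is the sum over all darts of 1/deg, the sum
   over tiles of the reciprocal degrees of the four corners is 4V = |T| + 8,
   whereas there are |T|/4 tiles.  Hence some tile has reciprocal degree sum
   greater than 1, and with all degrees at least 3 the only degree
   quadruples with 1/a + 1/b + 1/c + 1/d > 1 are those listed. *)

Definition special_degrees (s : seq nat) : Prop :=
  exists d : nat,
    [\/ perm_eq s [:: 3; 3; 3; d] /\ (3 <= d)%N,
        perm_eq s [:: 3; 3; 4; d] /\ (4 <= d <= 11)%N,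
        perm_eq s [:: 3; 3; 5; d] /\ d \in [:: 5; 6; 7]
      | perm_eq s [:: 3; 4; 4; d] /\ d \in [:: 4; 5]].

Lemma special_degrees_perm (s t : seq nat) :
  perm_eq s t -> special_degrees s -> special_degrees t.
Proof.
move=> st [d Hd]; exists d.
by case: Hd => -[sd Hd]; [apply: Or41 | apply: Or42 | apply: Or43 | apply: Or44];
  rewrite -(permPl st).
Qed.

Local Open Scope ring_scope.

Lemma ler_inv_nat (m k : nat) : (m <= k)%N -> (0 < m)%N ->
  (k%:R^-1 : rat) <= m%:R^-1.
Proof.
by move=> mk m_gt0; rewrite lef_pV2 ?ler_nat // posrE ltr0n // (leq_trans m_gt0).
Qed.

Lemma special_degrees_sorted (a b c d : nat) :
  (3 <= a <= b)%N -> (b <= c <= d)%N ->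
  1 < (a%:R^-1 + b%:R^-1 + c%:R^-1 + d%:R^-1 : rat) ->
  special_degrees [:: a; b; c; d].
Proof.
move=> /andP[a3 ab] /andP[bc cd] sum_gt1.
have a_gt0 : (0 < a)%N by lia.
have b_gt0 : (0 < b)%N by lia.
have c_gt0 : (0 < c)%N by lia.
have hb := ler_inv_nat ab a_gt0.
have hc := ler_inv_nat bc b_gt0.
have hd := ler_inv_nat cd c_gt0.
(* Each case bound [k <= x] is refuted by replacing x and the larger terms by k. *)
have [a4 | a_lt4] := leqP 4 a; first by have := ler_inv_nat a4 isT; lra.
have a_eq3 : a = 3%N by lia.
subst a.
have [b5 | b_lt5] := leqP 5 b; first by have := ler_inv_nat b5 isT; lra.
have [b3 | b4] : b = 3%N \/ b = 4%N by lia.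
- subst b; have [c6 | c_lt6] := leqP 6 c; first by have := ler_inv_nat c6 isT; lra.
  have [c3 | [c4 | c5]] : c = 3%N \/ c = 4%N \/ c = 5%N by lia.
  + by subst c; exists d; apply: Or41.
  + subst c; have [d12 | d_lt12] := leqP 12 d.
      by have := ler_inv_nat d12 isT; lra.
    by exists d; apply: Or42; split=> //; lia.
  + subst c; have [d8 | d_lt8] := leqP 8 d.
      by have := ler_inv_nat d8 isT; lra.
    by exists d; apply: Or43; rewrite !inE; split=> //; lia.
- subst b; have [c5 | c_lt5] := leqP 5 c; first by have := ler_inv_nat c5 isT; lra.
  have c_eq4 : c = 4%N by lia.
  subst c.
  have [d6 | d_lt6] := leqP 6 d; first by have := ler_inv_nat d6 isT; lra.
  by exists d; apply: Or44; rewrite !inE; split=> //; lia.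
Qed.

Lemma special_degrees_of_inv_sum (s : seq nat) :
  size s = 4%N -> all (leq 3) s -> 1 < \sum_(k <- s) (k%:R^-1 : rat) ->
  special_degrees s.
Proof.
move=> size_s s_ge3; rewrite -(perm_big _ (permEl (perm_sort leq s))) => sum_gt1.
apply: (@special_degrees_perm (sort leq s)); first exact: permEl (perm_sort leq s).
have := sort_sorted leq_total s; have := size_sort leq s; rewrite size_s.
have := s_ge3; rewrite -(all_sort _ leq).
move: (sort leq s) sum_gt1 => [|a [|b [|c [|d []]]]] //= sum_gt1.
move=> /and5P[a3 _ _ _ _] _ /and4P[ab bc cd _].
apply: special_degrees_sorted; rewrite ?a3 ?ab ?bc ?cd //.
by move: sum_gt1; rewrite !big_cons big_nil addr0 !addrA.
Qed.

Lemma sum_inv_order (R : numFieldType) (T : finType) (f : T -> T) :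
  injective f -> \sum_(x : T) ((order f x)%:R^-1 : R) = (fcard f T)%:R.
Proof.
move=> f_inj; have f_sym : connect_sym (frel f) := fconnect_sym f_inj.
rewrite (partition_big (froot f) (froots f)) /=; last by move=> x _; exact: roots_root.
have orbit_r r x : r \in froots f -> (froot f x == r) = fconnect f r x.
  by move=> /eqP r_root; rewrite f_sym -(root_connect f_sym) r_root.
have order_orbit r x : fconnect f r x -> order f x = order f r.
  by move=> rx; apply: eq_card => y; rewrite -!topredE /= (same_connect f_sym rx).
rewrite (eq_bigr (fun _ => 1)) ?sumr_const.
  by congr _%:R; apply: eq_card => x; rewrite !inE andbT.
move=> r r_root; rewrite (eq_bigr (fun _ => (order f r)%:R^-1)); last first.
  by move=> x; rewrite orbit_r // => /order_orbit ->.
rewrite sumr_const (eq_card (B := fconnect f r)); last first.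
  by move=> x; rewrite unfold_in; exact: orbit_r.
by rewrite -[X in X = 1]mulr_natr mulVf // pnatr_eq0 -lt0n order_gt0.
Qed.

Lemma order_involution (T : finType) (f : T -> T) :
  involutive f -> (forall x, f x != x) -> forall x, order f x = 2%N.
Proof.
move=> fK f_fixfree x; apply: (@order_cycle _ f [:: x; f x]) => //=.
- by rewrite fK !eqxx.
- by rewrite andbT inE eq_sym f_fixfree.
- by rewrite inE eqxx.
Qed.

Lemma inj_iter (T : Type) (f : T -> T) (k : nat) :
  injective f -> injective (iter k f).
Proof. by move=> f_inj; elim: k => [|k IHk] x y //= /f_inj /IHk. Qed.

Section QuadrangulationCount.

Variables (T : finType) (n e : T -> T).
Hypotheses (n_inj : injective n) (eK : involutive e).
Hypothesis e_fixfree : forall x, e x != x.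
Hypotheses (euler : spherical n e) (face_order : forall x, order (face n e) x = 4%N).

Let face_inj : injective (face n e).
Proof. by move=> x y /n_inj /(can_inj eK). Qed.

Lemma sum_inv_vdeg : \sum_(x : T) ((vdeg n x)%:R^-1 : rat) = #|T|%:R / 4 + 2.
Proof.
have fcard_const_order k (g : T -> T) : injective g -> (forall x, order g x = k) ->
    (fcard g T)%:R = #|T|%:R / k%:R :> rat.
  move=> g_inj g_order; rewrite -sum_inv_order //.
  by rewrite (eq_bigr (fun _ => k%:R^-1)) ?sumr_const ?mulr_natl // => x _; rewrite g_order.
have := congr1 (fun m => m%:R : rat) euler; rewrite /= !natrD.
rewrite (fcard_const_order 4%N _ face_inj face_order).
rewrite (fcard_const_order 2%N _ (can_inj eK) (order_involution eK e_fixfree)).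
rewrite /vdeg sum_inv_order //; lra.
Qed.

Lemma sum_tile_inv_vdeg :
  \sum_(x : T) \sum_(i < 4) ((vdeg n (iter i (face n e) x))%:R^-1 : rat)
    = #|T|%:R + 8.
Proof.
rewrite exchange_big /= (eq_bigr (fun _ => #|T|%:R / 4 + 2)).
  by rewrite sumr_const card_ord; lra.
by move=> i _; rewrite -sum_inv_vdeg [RHS](reindex_inj (inj_iter (k := i) face_inj)).
Qed.

Lemma exists_tile_inv_vdeg_gt1 :
  exists x, 1 < \sum_(k <- tile_degrees n e x) (k%:R^-1 : rat).
Proof.
apply/existsP; apply: contraT; rewrite negb_exists => /forallP tiles_le1.
have : \sum_(x : T) \sum_(i < 4) ((vdeg n (iter i (face n e) x))%:R^-1 : rat)
         <= \sum_(x : T) 1.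
  apply: ler_sum => x _; move: (tiles_le1 x); rewrite -leNgt.
  by rewrite big_map -(big_mkord xpredT (fun i => (vdeg n (iter i _ x))%:R^-1)).
rewrite sum_tile_inv_vdeg sumr_const -[_ *+ _]mulr_natr mul1r; lra.
Qed.

End QuadrangulationCount.

Local Close Scope ring_scope.

Theorem lemma1 (T : finType) (n e : T -> T) :
  quad_tiling_of_sphere n e ->
  (forall x : T, 3 <= vdeg n x) ->
  exists (x : T) (d : nat),
    [\/ perm_eq (tile_degrees n e x) [:: 3; 3; 3; d] /\ 3 <= d,
        perm_eq (tile_degrees n e x) [:: 3; 3; 4; d] /\ 4 <= d <= 11,
        perm_eq (tile_degrees n e x) [:: 3; 3; 5; d] /\ d \in [:: 5; 6; 7]
      | perm_eq (tile_degrees n e x) [:: 3; 4; 4; d] /\ d \in [:: 4; 5]].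
Proof.
case=> n_inj eK e_fixfree _ [euler face_order _] vdeg_ge3.
have [x sum_gt1] := exists_tile_inv_vdeg_gt1 n_inj eK e_fixfree euler face_order.
exists x; apply: special_degrees_of_inv_sum sum_gt1; first by rewrite size_map.
by apply/allP => k /mapP[i _ ->]; exact: vdeg_ge3.
Qed.
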